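(* Let $0\le k\le n$ and $\lambda,\mu\vdash n$. Then $$m\big((\lambda,\mu),\alpha_{H_n^k}\big)=\big\langle\chi_\lambda\downarrow^{S_n}_{S_{n-k}},\chi_\mu\downarrow^{S_n}_{S_{n-k}}\big\rangle_{S_{n-k}},$$ that is, $\alpha_{H_n^k}\cong\bigoplus_{\lambda,\mu\vdash n}\langle\chi_\lambda\downarrow^{S_n}_{S_{n-k}},\chi_\mu\downarrow^{S_n}_{S_{n-k}}\rangle\, S^\lambda\otimes S^\mu$.
   Context: Permutations are composed as functions, and $\pi\in S_n$ is identified with the permutation matrix whose $(i,j)$ entry is $1$ iff $i=\pi(j)$. For $A\in GL_n(\mathbb{Z}_2)$ let $\eta(A)$ (resp. $\theta(A)$) be the partition obtained by sorting the row sums (resp. column sums) of $A$, computed as integers, in weakly decreasing order. For $0\le k\le n$, $H_n^k=\{A\in GL_n(\mathbb{Z}_2)\mid \eta(A)=(n,n-1,\dots,n-k+1,1^{n-k}),\ \theta(A)=((k+1)^{n-k},k,k-1,\dots,1)\}$. $\alpha_{H_n^k}$ is the complex permutation representation of $S_n\times S_n$ on the space with basis $H_n^k$ given by $(\pi,\sigma)\bullet A=\pi A\sigma^{-1}$. $m((\lambda,\mu),\varphi)$ is the multiplicity of the irreducible $S_n\times S_n$-module $S^\lambda\otimes S^\mu$ in $\varphi$. $\chi_\lambda$ is the irreducible character of $S_n$ indexed by $\lambda$; $S_{n-k}$ is embedded in $S_n$ as the permutations fixing $1,\dots,k$; $\langle\cdot,\cdot\rangle_{S_{n-k}}$ is the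 standard inner product of class functions on $S_{n-k}$. *)

From HB Require Import structures.
From mathcomp Require Import all_boot all_order all_algebra all_fingroup all_field all_character.
Set Implicit Arguments. Unset Strict Implicit. Unset Printing Implicit Defensive.
Import Order.TTheory GRing.Theory Num.Theory.
Local Open Scope ring_scope.

(* Indices are 0-based: the paper's {1,...,n} is 'I_n = {0,...,n-1}. *)

Definition is_partition (n : nat) (l : seq nat) : bool :=
  [&& sorted geq l, all (fun x => 0 < x)%N l & sumn l == n].

Definition pmat (n : nat) (p : 'S_n) : 'M['F_2]_n :=
  \matrix_(i, j) (i == p j)%:R.

Definition row_sums (n : nat) (A : 'M['F_2]_n) : seq nat :=
  [seq (\sum_(j < n) (A i j : nat))%N | i <- enum 'I_n].
Definition col_sums (n : nat) (A : 'M['F_2]_n) : seq nat :=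
  [seq (\sum_(i < n) (A i j : nat))%N | j <- enum 'I_n].

Definition eta (n : nat) (A : 'M['F_2]_n) : seq nat := sort geq (row_sums A).
Definition theta (n : nat) (A : 'M['F_2]_n) : seq nat := sort geq (col_sums A).

Definition eta_target (n k : nat) : seq nat :=
  [seq (n - i)%N | i <- iota 0 k] ++ nseq (n - k) 1%N.
Definition theta_target (n k : nat) : seq nat :=
  nseq (n - k) k.+1 ++ [seq (k - i)%N | i <- iota 0 k].

Definition H_set (n k : nat) : {set 'M['F_2]_n} :=
  [set A : 'M['F_2]_n | [&& A \in unitmx,
                           eta A == eta_target n k &
                           theta A == theta_target n k]].

Definition HAct (n : nat) (p s : 'S_n) (A : 'M['F_2]_n) : 'M['F_2]_n :=
  pmat p *m A *m pmat (s^-1)%g.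

(* character of the permutation representation alpha_{H_n^k} of S_n x S_n *)
Definition alphaH (n k : nat) (p s : 'S_n) : algC :=
  (#|[set A in H_set n k | HAct p s A == A]|)%:R.

(* Young diagram of shape l, cells numbered 0..n-1 in row reading order *)
Definition cell_row (l : seq nat) (p : nat) : nat :=
  count (fun i => sumn (take i.+1 l) <= p)%N (iota 0 (size l)).
Definition cell_col (l : seq nat) (p : nat) : nat :=
  (p - sumn (take (cell_row l p) l))%N.

(* A tableau is t : 'S_n, cell p containing entry t p.
   Tabloids are (encoded inside) row-assignments of entries f : 'I_n -> 'I_n.+1. *)
Definition tabloidT (n : nat) := {ffun 'I_n -> 'I_n.+1}.

Definition tabloid_of (n : nat) (l : seq nat) (t : 'S_n) : tabloidT n :=
  [ffun e => inord (cell_row l ((t^-1)%g e))].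

Definition colstab (n : nat) (l : seq nat) (t s : 'S_n) : bool :=
  [forall e : 'I_n, cell_col l ((t^-1)%g (s e)) == cell_col l ((t^-1)%g e)].

Definition tvec (n : nat) (f : tabloidT n) : 'rV[algC]_#|{: tabloidT n}| :=
  \row_j (j == enum_rank f)%:R.

(* polytabloid e_t = sum_{s in C_t} sgn(s) {s t};  s t has entry s (t p) in cell p,
   i.e. it is the permutation t * s in MathComp's convention *)
Definition polytabloid (n : nat) (l : seq nat) (t : 'S_n)
  : 'rV[algC]_#|{: tabloidT n}| :=
  \sum_(s : 'S_n | colstab l t s) (-1) ^+ odd_perm s *: tvec (tabloid_of l (t * s)%g).

(* rows span the Specht module S^l inside the permutation module on tabloids *)
Definition specht_mx (n : nat) (l : seq nat)
  : 'M[algC]_(#|{: 'S_n}|, #|{: tabloidT n}|) :=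
  \matrix_(i < #|{: 'S_n}|) polytabloid l (enum_val i).

(* action of pi on tabloids : entry e in row f e moves to pi e *)
Definition tab_act (n : nat) (p : 'S_n) (f : tabloidT n) : tabloidT n :=
  [ffun e => f ((p^-1)%g e)].

Definition tab_rep (n : nat) (p : 'S_n) : 'M[algC]_#|{: tabloidT n}| :=
  \matrix_(x, y) (enum_val y == tab_act p (enum_val x))%:R.

(* chi_lambda (pi) = trace of pi acting on the Specht module S^lambda *)
Definition chi (n : nat) (l : seq nat) (p : 'S_n) : algC :=
  let U := <<specht_mx n l>>%MS in
  \tr (in_submod U (val_submod (1%:M : 'M_(\rank U)) *m tab_rep p)).

(* multiplicity of S^lambda (x) S^mu in alpha_{H_n^k}: character inner product over S_n x S_n *)
Definition mult_H (n k : nat) (l m : seq nat) : algC :=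
  (#|{: 'S_n * 'S_n}|%:R)^-1 *
  \sum_(g : 'S_n * 'S_n) @alphaH n k g.1 g.2 * (chi l g.1 * chi m g.2)^*.

(* S_{n-k} : permutations fixing 1..k (0..k-1 here) *)
Definition Sfix (n k : nat) : {set 'S_n} :=
  [set s : 'S_n | [forall i : 'I_n, (i < k)%N ==> (s i == i)]].

Definition res_inner (n k : nat) (l m : seq nat) : algC :=
  (#|Sfix n k|%:R)^-1 * \sum_(s in Sfix n k) chi l s * (chi m s)^*.

(* The action (pi, sigma) . A = pi A sigma^-1 is transitive on H_n^k.  Permute
   the rows and columns of A in H_n^k so that its row sums read
   (n, n-1, ..., n-k+1, 1, ..., 1) and its column sums (1, ..., k, k+1, ..., k+1).
   These margins force row i < k to be the indicator of {j >= i} and the last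
   n-k rows to form a permutation matrix on the last n-k columns, so A lies in
   the orbit of the matrix A0 = H_base n k, whose stabiliser is the diagonal
   copy of S_{n-k}.  Counting fixed points orbitwise (Frobenius reciprocity for
   the induced character) gives the multiplicity
   (1/|S_{n-k}|) sum_{x in S_{n-k}} chi_lambda(x) chi_mu(x), which is the
   restricted inner product because chi_mu is real: the Specht module is
   spanned by integer vectors. *)

From mathcomp Require Import all_boot all_order all_algebra all_fingroup all_field all_character.
From mathcomp Require Import zify.
Set Implicit Arguments. Unset Strict Implicit. Unset Printing Implicit Defensive.
Import GRing.Theory Num.Theory Num.Def.

Lemma sort_eq_perm (T : eqType) (leT : rel T) :
  total leT -> transitive leT -> antisymmetric leT ->
  forall s t, sorted leT t -> (sort leT s == t) = perm_eq s t.
Proof.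
move=> leT_total leT_tr leT_anti s t t_sorted.
apply/eqP/idP => [<-|st]; first by rewrite perm_sym perm_sort.
apply: sorted_eq leT_tr leT_anti _ _ _ t_sorted _; first exact: sort_sorted.
by rewrite perm_sort.
Qed.

Lemma perm_eq_map_ordP (T : eqType) n (f g : 'I_n -> T) :
  reflect (exists p : 'S_n, forall i, f i = g (p i))
          (perm_eq [seq f i | i <- enum 'I_n] [seq g i | i <- enum 'I_n]).
Proof.
have -> : [seq g i | i <- enum 'I_n] = [tuple g i | i < n] by [].
apply: (iffP tuple_permP) => [[p /eq_in_map fgp]|[p fgp]]; exists p.
  by move=> i; rewrite fgp ?mem_enum //= tnth_mktuple.
by apply/eq_in_map => i _ /=; rewrite fgp tnth_mktuple.
Qed.

Lemma map_const_in (T1 : eqType) (T2 : eqType) (f : T1 -> T2) c (s : seq T1) :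
  (forall x, x \in s -> f x = c) -> map f s = nseq (size s) c.
Proof.
move=> fc; rewrite -(size_map f); apply/all_pred1P/allP => _ /mapP[x sx ->].
by rewrite /= fc.
Qed.

Lemma eq_sum_leq (I : finType) (P : pred I) (F G : I -> nat) :
    (forall x, P x -> F x <= G x) -> \sum_(x | P x) G x <= \sum_(x | P x) F x ->
  forall x, P x -> F x = G x.
Proof.
move=> leFG leGF x Px; have [_] := leqif_sum (fun i Pi => leqif_eq (leFG i Pi)).
by rewrite eqn_leq leGF leq_sum // => /esym/forall_inP/(_ x Px)/eqP.
Qed.

Lemma sum_ord_ltn n k : \sum_(i < n) (i < k) = minn k n.
Proof. by elim: n => [|n IH]; rewrite ?big_ord0 ?big_ord_recr /= ?IH; lia. Qed.

Lemma sum_ord_geq n k : \sum_(i < n) (k <= i) = n - k.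
Proof. by elim: n => [|n IH]; rewrite ?big_ord0 ?big_ord_recr /= ?IH; lia. Qed.

Lemma F2_le1 (x : 'F_2) : x <= 1.
Proof. by case: x => [[|[|]]]. Qed.

Lemma F2_natr (c : bool) : (c%:R : 'F_2)%R = c :> nat.
Proof. by case: c. Qed.

(** * Counting fixed points along an orbit *)

Section OrbitSum.
Variables (gT : finGroupType) (T : finType) (to : {action gT &-> T}).
Variables (R : pzSemiRingType) (phi : gT -> R).
Local Open Scope ring_scope.
Hypothesis phiJ : forall g h, phi (g ^ h)%g = phi g.

Lemma sum_astab1_orbit x y : y \in orbit to [set: gT] x ->
  \sum_(g in 'C[y | to]%g) phi g = \sum_(g in 'C[x | to]%g) phi g.
Proof.
case/orbitP=> a _ <-; rewrite astab1_act (reindex_inj (conjg_inj a)) /=.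
by apply: eq_big => [g|g _]; rewrite ?memJ_conjg ?phiJ.
Qed.

Lemma sum_card_fix_orbit x :
  \sum_(g : gT) #|[set y in orbit to [set: gT] x | to y g == y]|%:R * phi g =
  #|orbit to [set: gT] x|%:R * \sum_(g in 'C[x | to]%g) phi g.
Proof.
set O := orbit to _ x.
transitivity (\sum_(y in O) \sum_(g : gT) (to y g == y)%:R * phi g).
  rewrite exchange_big; apply: eq_bigr => g _.
  rewrite -sum1_card big_set /= big_mkcondr natr_sum mulr_suml.
  by apply: eq_bigr => y _; case: eqP; rewrite ?mul1r ?mul0r.
rewrite mulr_natl -sumr_const; apply: eq_bigr => y Oy.
rewrite -(sum_astab1_orbit Oy) [RHS]big_mkcond; apply: eq_bigr => g _.
by rewrite (sameP astab1P eqP); case: eqP; rewrite ?mul1r ?mul0r.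
Qed.

End OrbitSum.

(** * Characters of Specht modules *)

Section SpechtCharacters.
Variables (n : nat) (l : seq nat).
Local Open Scope ring_scope.

Lemma tab_act1 (f : tabloidT n) : tab_act 1%g f = f.
Proof. by apply/ffunP=> e; rewrite ffunE invg1 perm1. Qed.

Lemma tab_actM (p q : 'S_n) (f : tabloidT n) :
  tab_act (p * q)%g f = tab_act q (tab_act p f).
Proof. by apply/ffunP=> e; rewrite !ffunE invMg permM. Qed.

Lemma tvec_tab_rep (f : tabloidT n) p : tvec f *m tab_rep p = tvec (tab_act p f).
Proof.
apply/rowP=> y; rewrite !mxE (bigD1 (enum_rank f)) //= big1 ?addr0 => [|z /negbTE nz].
  by rewrite !mxE eqxx mul1r enum_rankK -(can_eq enum_rankK) enum_valK.
by rewrite !mxE nz mul0r.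
Qed.

Lemma tab_rep_repr : mx_repr [set: 'S_n] (@tab_rep n).
Proof.
split=> [|p q _ _].
  by apply/matrixP=> x y; rewrite !mxE tab_act1 (can_eq enum_valK) eq_sym.
apply/row_matrixP=> x; rewrite row_mul.
have row_tab_rep r y : row y (tab_rep r) = tvec (tab_act r (enum_val y)).
  by apply/rowP=> z; rewrite !mxE -(can_eq enum_valK) enum_rankK.
by rewrite !row_tab_rep tvec_tab_rep; congr tvec; apply: tab_actM.
Qed.

Definition tabloid_repr := MxRepresentation tab_rep_repr.

Lemma tab_act_tabloid (t q : 'S_n) :
  tab_act q (tabloid_of l t) = tabloid_of l (t * q)%g.
Proof. by apply/ffunP=> e; rewrite !ffunE invMg permM. Qed.

Lemma colstabJ (t q s : 'S_n) : colstab l (t * q)%g (s ^ q)%g = colstab l t s.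
Proof.
apply/forallP/forallP=> H e; last by rewrite invMg !permM !permK; apply: H.
by have := H (q e); rewrite invMg !permM !permK.
Qed.

Lemma polytabloid_tab_rep (t q : 'S_n) :
  polytabloid l t *m tab_rep q = polytabloid l (t * q)%g.
Proof.
rewrite /polytabloid mulmx_suml [RHS](reindex_inj (conjg_inj q)) /=.
apply: eq_big => [s|s _]; first by rewrite colstabJ.
by rewrite -scalemxAl tvec_tab_rep tab_act_tabloid odd_permJ conjgE !mulgA mulgK.
Qed.

Lemma specht_module : mxmodule tabloid_repr <<specht_mx n l>>%MS.
Proof.
apply/mxmoduleP=> q _; rewrite (eqmxMr _ (genmxE _)) genmxE.
apply/row_subP=> i; rewrite row_mul rowK polytabloid_tab_rep.
set t := (enum_val i * q)%g.
have <- : row (enum_rank t) (specht_mx n l) = polytabloid l t by rewrite rowK enum_rankK.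
exact: row_sub.
Qed.

Lemma chi_cfRepr (x : 'S_n) : chi l x = cfRepr (submod_repr specht_module) x.
Proof. by rewrite cfunE inE mulr1n. Qed.

Lemma chiJ (x y : 'S_n) : chi l (x ^ y)%g = chi l x.
Proof. by rewrite !chi_cfRepr cfunJ ?inE. Qed.

Lemma mxtrace_submod (F : fieldType) N (U P : 'M[F]_N) :
  \tr (in_submod U (val_submod 1%:M *m P)) =
  \tr (row_ebase U *m P *m invmx (row_ebase U) *m pid_mx (\rank U)).
Proof.
rewrite /in_submod /val_submod /= mul1mx /row_base -!mulmxA mxtrace_mulC.
by rewrite !mulmxA -(mulmxA _ (pid_mx _)) pid_mx_id ?rank_leq_col.
Qed.

Lemma conj_specht_mx : map_mx conjC (specht_mx n l) = specht_mx n l.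
Proof.
apply/matrixP=> i j; rewrite !mxE /polytabloid !summxE rmorph_sum.
by apply: eq_bigr => s _; rewrite !mxE rmorphM /= rmorph_sign rmorph_nat.
Qed.

Lemma conj_tab_rep (p : 'S_n) : map_mx conjC (tab_rep p) = tab_rep p.
Proof. by apply/matrixP=> x y; rewrite !mxE rmorph_nat. Qed.

(* The Specht module is spanned by integer vectors, so it is stable under
   complex conjugation, and conjugating the trace formula of chi changes
   nothing. *)
Lemma conj_chi (x : 'S_n) : (chi l x)^* = chi l x.
Proof.
set U := <<specht_mx n l>>%MS.
have eqU : (map_mx conjC U :=: U)%MS.
  by apply: eqmx_trans (map_genmx _ _) _; rewrite conj_specht_mx.
have modU' : mxmodule tabloid_repr (map_mx conjC U).
  by rewrite (eqmx_module _ eqU) specht_module.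
have conjU_chi : \tr (in_submod (map_mx conjC U) (val_submod 1%:M *m tab_rep x)) = chi l x.
  exact: mxtrace_rsim (proj2 (mx_rsim_iso modU' specht_module) (eqmx_iso _ eqU)) x (in_setT x).
rewrite -[RHS]conjU_chi /chi -/U !mxtrace_submod -trace_map_mx !map_mxM map_pid_mx.
by rewrite map_invmx map_row_ebase conj_tab_rep mxrank_map.
Qed.

End SpechtCharacters.

(** * The action of S_n x S_n on F_2 matrices *)

Section Bimultiplication.
Variable n : nat.
Implicit Types (p s : 'S_n) (A : 'M['F_2]_n).

Lemma pmatE p : pmat p = perm_mx p^-1%g.
Proof. by apply/matrixP=> i j; rewrite !mxE (canF_eq (permKV p)). Qed.

Lemma HActE p s A i j : HAct p s A i j = A (p^-1%g i) (s^-1%g j).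
Proof. by rewrite /HAct !pmatE -col_permE -row_permE !mxE. Qed.

Lemma HAct1 A : HAct 1%g 1%g A = A.
Proof. by apply/matrixP=> i j; rewrite HActE invg1 !perm1. Qed.

Lemma HActM p s p' s' A :
  HAct (p * p')%g (s * s')%g A = HAct p' s' (HAct p s A).
Proof. by apply/matrixP=> i j; rewrite !HActE !invMg !permM. Qed.

Lemma unitmx_HAct p s A : (HAct p s A \in unitmx) = (A \in unitmx).
Proof. by rewrite /HAct !pmatE !unitmx_mul !unitmx_perm andbT. Qed.

Definition bimul_act A (g : 'S_n * 'S_n) := HAct g.1 g.2 A.

Lemma bimul_act1 : bimul_act^~ 1%g =1 id.
Proof. exact: HAct1. Qed.

Lemma bimul_actM A : act_morph bimul_act A.
Proof. by move=> g h; apply: HActM. Qed.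

(* MathComp's [p * q] is [q \o p], which makes [HAct] a right action of the
   direct product, as [action] requires. *)
Definition bimul_action := TotalAction bimul_act1 bimul_actM.

Lemma bimul_actionE A g : bimul_action A g = HAct g.1 g.2 A.
Proof. by []. Qed.

Definition rsum A i : nat := \sum_(j < n) A i j.
Definition csum A j : nat := \sum_(i < n) A i j.

Lemma rsum_HAct p s A i : rsum (HAct p s A) i = rsum A (p^-1%g i).
Proof.
by rewrite /rsum (reindex_inj (@perm_inj _ s)); apply: eq_bigr => j _; rewrite HActE permK.
Qed.

Lemma csum_HAct p s A j : csum (HAct p s A) j = csum A (s^-1%g j).
Proof.
by rewrite /csum (reindex_inj (@perm_inj _ p)); apply: eq_bigr => i _; rewrite HActE permK.
Qed.

End Bimultiplication.

Section Targets.
Variables n k : nat.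
Hypothesis kn : k <= n.

Definition row_target (i : nat) : nat := if i < k then n - i else 1.
Definition col_target (j : nat) : nat := if j < k then j.+1 else k.+1.

Lemma iota_split : iota 0 n = iota 0 k ++ iota k (n - k).
Proof. by rewrite -iotaD subnKC. Qed.

Lemma eta_targetE : eta_target n k = [seq row_target i | i <- iota 0 n].
Proof.
rewrite iota_split map_cat /eta_target; congr (_ ++ _).
  by apply/eq_in_map => i; rewrite mem_iota /row_target => /andP[_ ->].
rewrite -{1}(size_iota k (n - k)); symmetry; apply: map_const_in => i.
by rewrite mem_iota /row_target => /andP[ki _]; rewrite ltnNge ki.
Qed.

Lemma theta_targetE : theta_target n k = rev [seq col_target j | j <- iota 0 n].
Proof.
rewrite iota_split map_cat rev_cat /theta_target; congr (_ ++ _).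
  rewrite -{1}(size_iota k (n - k)) -rev_nseq; congr rev; symmetry.
  by apply: map_const_in => i; rewrite mem_iota /col_target => /andP[ki _]; rewrite ltnNge ki.
apply: (@eq_from_nth _ 0%N) => [|i]; rewrite ?size_rev !size_map ?size_iota // => ik.
rewrite nth_rev size_map size_iota // !(nth_map 0%N) ?nth_iota ?size_iota; try lia.
by rewrite /col_target ifT; lia.
Qed.

Lemma sorted_eta_target : sorted geq (eta_target n k).
Proof.
rewrite eta_targetE; apply: homo_sorted (iota_sorted 0 n) => x y /= xy.
by rewrite /row_target; case: (ltnP x k); case: (ltnP y k); lia.
Qed.

Lemma sorted_theta_target : sorted geq (theta_target n k).
Proof.
rewrite theta_targetE rev_sorted; apply: homo_sorted (iota_sorted 0 n) => x y /= xy.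
by rewrite /col_target; case: (ltnP x k); case: (ltnP y k); lia.
Qed.

Lemma row_target_inj i j : i < k -> j < n -> row_target i = row_target j -> i = j.
Proof. by rewrite /row_target => ik jn; rewrite ik; case: ltnP; lia. Qed.

Lemma H_setP (A : 'M['F_2]_n) :
  reflect [/\ A \in unitmx,
              exists p : 'S_n, forall i, rsum A i = row_target (p i)
            & exists s : 'S_n, forall j, csum A j = col_target (s j)]
          (A \in H_set n k).
Proof.
have geq_total : total geq by move=> x y; apply: leq_total.
have geq_trans : transitive geq by move=> x y z /= yx zy; apply: leq_trans zy yx.
have geq_anti : antisymmetric geq by move=> x y; rewrite /= andbC; apply: anti_leq.
have enumE f : [seq f i | i <- iota 0 n] = [seq f (val i) | i <- enum 'I_n].
  by rewrite -val_enum_ord -map_comp.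
rewrite inE /eta /theta !sort_eq_perm ?sorted_eta_target ?sorted_theta_target //.
rewrite eta_targetE theta_targetE (perm_sym (col_sums A)) perm_rev (perm_sym _ (col_sums A)) !enumE.
apply: (iffP and3P) => [[uA /perm_eq_map_ordP rA /perm_eq_map_ordP cA]|[uA rA cA]].
  by split.
by split=> //; apply/perm_eq_map_ordP.
Qed.

End Targets.

Lemma col_target_inj k i j : i < k -> col_target k i = col_target k j -> i = j.
Proof. by rewrite /col_target => ik; rewrite ik; case: ltnP; lia. Qed.

(** * 0/1 matrices with the margins of H_n^k *)

Definition base_entry k (i j : nat) : bool := if i < k then i <= j else i == j.

Section ZeroOneMargins.
Variables (n k : nat) (b : 'I_n -> 'I_n -> nat).
Hypotheses (kn : k <= n) (b_le1 : forall i j, b i j <= 1)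
  (b_rows : forall i, \sum_j b i j = row_target n k i)
  (b_cols : forall j, \sum_i b i j = col_target k j).
Implicit Types i j : 'I_n.

(* Rows [i < k], with sum [n - i], are called heavy; rows [k <= i], with sum 1,
   are called light. *)

Lemma col_sum_split j :
  \sum_i b i j = \sum_(i < n | i < k) b i j + \sum_(i < n | k <= i) b i j.
Proof.
by rewrite (bigID (fun i : 'I_n => i < k)) /=; under [X in _ + X]eq_bigl do rewrite -leqNgt.
Qed.

Lemma sum_heavy_le j : \sum_(i < n | i < k) b i j <= k.
Proof.
rewrite -[k in _ <= k](minn_idPl kn) -sum_ord_ltn big_mkcond /=.
by apply: leq_sum => i _; case: ifP.
Qed.

Lemma sum_light_rows : \sum_j \sum_(i < n | k <= i) b i j = n - k.
Proof.
rewrite exchange_big -sum_ord_geq big_mkcond /=; apply: eq_bigr => i _.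
by case: (leqP k i) => // ki; rewrite b_rows /row_target ltnNge ki.
Qed.

Lemma light_col_sum j : \sum_(i < n | k <= i) b i j = (k <= j : nat).
Proof.
symmetry; apply: (@eq_sum_leq _ (fun=> true) (fun j' => k <= j' : nat)
                                (fun j' => \sum_(i < n | k <= i) b i j')) => // [j' _|].
  case: (leqP k j') => //= kj'; move: (col_sum_split j') (sum_heavy_le j').
  by rewrite b_cols /col_target ltnNge kj' /=; lia.
by rewrite sum_light_rows -sum_ord_geq big_mkcond.
Qed.

Lemma heavy_col_sum j : \sum_(i < n | i < k) b i j = minn j.+1 k.
Proof.
by have := col_sum_split j; rewrite b_cols light_col_sum /col_target; case: ltnP; lia.
Qed.

Lemma light_row_heavy_col i j : k <= i -> j < k -> b i j = 0.
Proof.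
move=> ki jk; have /eqP := light_col_sum j.
by rewrite leqNgt jk sum_nat_eq0 => /forall_inP/(_ i ki)/eqP.
Qed.

Lemma heavy_row_light_col i j : i < k -> k <= j -> b i j = 1.
Proof.
move=> ik kj; apply: (@eq_sum_leq _ (fun i => i < k) (b^~ j) (fun=> 1)) => //.
by rewrite heavy_col_sum big_mkcond /= sum_ord_ltn; lia.
Qed.

(* Row by row: the column sums j + 1 force the zeros left of the diagonal,
   and then the row sum n - i forces the ones right of it. *)
Lemma heavy_row i j : i < k -> b i j = (i <= j : nat).
Proof.
have [m lt_i_m] := ubnP i; elim: m => // m IHm in i lt_i_m j *; move=> ik.
have left_zero j' : j' < i -> b i j' = (i <= j' : nat).
  move=> lt_j'i; symmetry.
  apply: (@eq_sum_leq _ (fun=> true) (fun i' => i' <= j' : nat) (b^~ j')) => // [i' _|].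
    case: (leqP i' j') => //= le_i'j'.
    have lt_i'i : i' < i := leq_ltn_trans le_i'j' lt_j'i.
    by rewrite IHm ?le_i'j' ?(ltn_trans lt_i'i ik) ?(leq_trans lt_i'i (ltnSE lt_i_m)).
  under [X in _ <= X]eq_bigr do rewrite -ltnS.
  by rewrite b_cols /col_target (ltn_trans lt_j'i ik) sum_ord_ltn (minn_idPl (ltn_ord j')).
apply: (@eq_sum_leq _ (fun=> true) (b i) (fun j' => i <= j' : nat)) => // [j' _|].
  case: (ltnP j' i) => [lt_j'i | _]; last exact: b_le1.
  by rewrite left_zero // (leqNgt i) lt_j'i.
by rewrite b_rows /row_target ik sum_ord_geq.
Qed.

Let light_col i := odflt i [pick j | b i j == 1].

Lemma light_rowE i : k <= i -> forall j, b i j = (light_col i == j : nat).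
Proof.
move=> ki; have /eqP := b_rows i; rewrite /row_target ltnNge ki /=.
case/(sum_nat_eq1 predT) => j0 [_ b_ij0 b_i0] j.
have ->: light_col i = j0.
  rewrite /light_col; case: pickP => [j1 /eqP b_ij1 | /(_ j0)]; last by rewrite b_ij0.
  by move: b_ij1; apply: contra_eq => /b_i0/(_ isT)->.
by case: eqVneq => [<- // | ne]; rewrite b_i0 // eq_sym.
Qed.

Lemma light_col_geq i : k <= i -> k <= light_col i.
Proof.
move=> ki; rewrite leqNgt; apply/negP => /(light_row_heavy_col ki).
by rewrite light_rowE // eqxx.
Qed.

Lemma light_col_inj : {in [pred i : 'I_n | k <= i] &, injective light_col}.
Proof.
move=> i i' ki ki' eq_col; set j := light_col i in eq_col.
have /eqP := light_col_sum j; rewrite /= light_col_geq //.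
case/sum_nat_eq1 => x [kx _ b_x0].
have onlyx (y : 'I_n) : k <= y -> b y j = 1 -> y = x.
  by move=> ky; apply: contra_eq => /b_x0->.
have b_ij : b i j = 1 by rewrite light_rowE ?eqxx.
have b_i'j : b i' j = 1 by rewrite eq_col light_rowE ?eqxx.
by rewrite (onlyx i ki b_ij) (onlyx i' ki' b_i'j).
Qed.

Lemma zero_one_margins_row_perm : exists q : 'S_n, forall i j, b i j = base_entry k (q i) j.
Proof.
pose q i := if i < k then i else light_col i.
have q_ltn i : (q i < k) = (i < k).
  rewrite /q; case: (ltnP i k) => // ki.
  by apply/negbTE; rewrite -leqNgt light_col_geq.
have q_inj : injective q.
  move=> i i' eq_q; have := q_ltn i'; rewrite -eq_q q_ltn; rewrite /q in eq_q.
  case: (ltnP i k) => [ik /esym i'k | ki /esym/negbT]; first by rewrite ik i'k in eq_q.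
  rewrite -leqNgt => ki'; rewrite ltnNge ki ltnNge ki' /= in eq_q.
  exact: light_col_inj.
exists (perm q_inj) => i j; rewrite permE /base_entry q_ltn /q.
by case: ltnP => [/heavy_row | /light_rowE]->.
Qed.

End ZeroOneMargins.

(** * H_n^k is a single orbit *)

Section SfixTheory.
Variables n k : nat.
Implicit Types (s : 'S_n) (i j : 'I_n).

Lemma SfixP s : reflect (forall i, i < k -> s i = i) (s \in Sfix n k).
Proof.
rewrite inE; apply: (iffP forallP) => [fix_s i ik | fix_s i].
  by have /implyP/(_ ik)/eqP := fix_s i.
by apply/implyP => /fix_s ->.
Qed.

Lemma Sfix_ltn s i : s \in Sfix n k -> (s i < k) = (i < k).
Proof.
move=> /SfixP fix_s; case: (ltnP i k) => [ik | ki]; first by rewrite fix_s.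
apply/negbTE/negP => lt_si_k; have /perm_inj eq_si := fix_s _ lt_si_k.
by move: lt_si_k; rewrite eq_si ltnNge ki.
Qed.

Lemma SfixV s : s \in Sfix n k -> s^-1%g \in Sfix n k.
Proof.
by move=> /SfixP fix_s; apply/SfixP => i ik; rewrite -{1}(fix_s i ik) permK.
Qed.

Lemma base_entry_Sfix s i j :
  s \in Sfix n k -> base_entry k (s i) (s j) = base_entry k i j.
Proof.
move=> Sfix_s; have /SfixP fix_s := Sfix_s; rewrite /base_entry !Sfix_ltn //.
case: (ltnP i k) => [ik | _]; last by rewrite (inj_eq val_inj) (inj_eq perm_inj).
rewrite fix_s //; case: (ltnP j k) => [jk | kj]; first by rewrite fix_s.
have kj' : k <= s j by rewrite leqNgt Sfix_ltn // -leqNgt.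
by rewrite (leq_trans (ltnW ik) kj) (leq_trans (ltnW ik) kj').
Qed.

End SfixTheory.

Definition H_base n k : 'M['F_2]_n := \matrix_(i, j) (base_entry k i j)%:R%R.

Section HBase.
Variables n k : nat.
Hypothesis kn : k <= n.
Implicit Types (p s : 'S_n) (i j : 'I_n) (A B : 'M['F_2]_n).

Local Notation H := (H_base n k).
Local Open Scope group_scope.

Lemma H_baseE i j : H i j = base_entry k i j :> nat.
Proof. by rewrite mxE F2_natr. Qed.

Lemma rsum_H_base i : rsum H i = row_target n k i.
Proof.
rewrite /rsum /row_target; under eq_bigr do rewrite H_baseE /base_entry.
case: ifP => _; first exact: sum_ord_geq.
rewrite (bigD1 i) //= eqxx big1 // => j ne_ji.
by rewrite (inj_eq val_inj) eq_sym (negbTE ne_ji).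
Qed.

Lemma csum_H_base j : csum H j = col_target k j.
Proof.
have entry (a : nat) : base_entry k a j = (a < minn k j.+1) + (k <= j) * (a == j) :> nat.
  by rewrite /base_entry leq_min ltnS; case: (ltnP a k) => ak; case: (ltngtP a j) => aj /=; lia.
rewrite /csum; under eq_bigr do rewrite H_baseE entry.
rewrite big_split /= sum_ord_ltn -big_distrr /= (bigD1 j) //= eqxx big1 => [|i].
  by rewrite /col_target; case: ltnP; lia.
by rewrite (inj_eq val_inj) => /negbTE ->.
Qed.

Lemma H_base_unitmx : H \in unitmx.
Proof.
rewrite unitmxE -det_tr det_trig.
  by rewrite big1 ?unitr1 // => i _; rewrite !mxE /base_entry leqnn eqxx if_same.
by apply/is_trig_mxP => i j lt_ij; rewrite !mxE /base_entry (leqNgt j) lt_ij gtn_eqF ?if_same.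
Qed.

Lemma H_base_in_H_set : H \in H_set n k.
Proof.
apply/(H_setP kn); split; first exact: H_base_unitmx.
  by exists 1 => i; rewrite perm1 rsum_H_base.
by exists 1 => j; rewrite perm1 csum_H_base.
Qed.

Lemma HAct_in_H_set p s A : A \in H_set n k -> HAct p s A \in H_set n k.
Proof.
case/(H_setP kn) => uA [p0 rA] [s0 cA]; apply/(H_setP kn); split.
- by rewrite unitmx_HAct.
- by exists (p^-1 * p0) => i; rewrite rsum_HAct rA permM.
- by exists (s^-1 * s0) => j; rewrite csum_HAct cA permM.
Qed.

Lemma margins_row_perm_H_base B :
    (forall i, rsum B i = row_target n k i) -> (forall j, csum B j = col_target k j) ->
  exists q : 'S_n, B = HAct q^-1 1 H.
Proof.
move=> rB cB; have [q Bq] := zero_one_margins_row_perm kn (fun i j => F2_le1 (B i j)) rB cB.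
exists q; apply/matrixP => i j; apply: ord_inj.
by rewrite HActE invgK invg1 perm1 H_baseE Bq.
Qed.

Lemma H_set_orbit : H_set n k = orbit (bimul_action n) [set: 'S_n * 'S_n] H.
Proof.
apply/setP=> A; apply/idP/idP => [HA | /orbitP[g _ <-]]; last first.
  exact: HAct_in_H_set H_base_in_H_set.
case/(H_setP kn): HA => _ [p rA] [s cA].
have [q HAq] : exists q : 'S_n, HAct p s A = HAct q^-1 1 H.
  by apply: margins_row_perm_H_base => [i|j]; rewrite ?rsum_HAct ?csum_HAct ?rA ?cA permKV.
have -> : A = HAct p^-1 s^-1 (HAct p s A) by rewrite -HActM !mulgV HAct1.
rewrite HAq -HActM.
exact: (mem_orbit (bimul_action n) _ (in_setT (q^-1 * p^-1, 1 * s^-1))).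
Qed.

Lemma HAct_H_base_eq p s : (HAct p s H == H) = (p == s) && (s \in Sfix n k).
Proof.
apply/eqP/andP => [fixH | [/eqP <- Sfix_p]]; last first.
  by apply/matrixP=> i j; apply: ord_inj; rewrite HActE !H_baseE base_entry_Sfix ?SfixV.
have fix_pV i : i < k -> p^-1 i = i.
  move=> ik; apply/ord_inj/esym/(row_target_inj kn ik (ltn_ord _)).
  by rewrite -!rsum_H_base -(rsum_HAct p s) fixH.
have fix_sV j : j < k -> s^-1 j = j.
  move=> jk; apply/ord_inj/esym/(col_target_inj jk).
  by rewrite -!csum_H_base -(csum_HAct p s) fixH.
have Sfix_pV : p^-1 \in Sfix n k by apply/SfixP.
have eq_pVsV : p^-1 = s^-1.
  apply/permP => i; case: (ltnP i k) => [ik | ki]; first by rewrite fix_pV ?fix_sV.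
  have := H_baseE i i; rewrite -{1}fixH HActE H_baseE /base_entry Sfix_ltn //.
  by rewrite ltnNge ki eqxx /=; case: eqP => [/ord_inj|].
by rewrite -(invgK p) eq_pVsV invgK -[s]invgK SfixV //; apply/SfixP.
Qed.

Lemma astab_H_base : 'C[H | bimul_action n] = [set (x, x) | x in Sfix n k].
Proof.
apply/setP => -[p s].
apply/astab1P/imsetP => [/eqP | [x Sfix_x [-> ->]]]; rewrite bimul_actionE /=.
  by rewrite HAct_H_base_eq => /andP[/eqP <- Sfix_p]; exists p.
by apply/eqP; rewrite HAct_H_base_eq eqxx.
Qed.

Lemma sum_astab_H_base (R : nmodType) (F : 'S_n * 'S_n -> R) :
  (\sum_(g in 'C[H | bimul_action n]) F g = \sum_(x in Sfix n k) F (x, x))%R.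
Proof. by rewrite astab_H_base big_imset // => x y _ _ []. Qed.

Lemma card_astab_H_base : #|'C[H | bimul_action n]| = #|Sfix n k|.
Proof. by rewrite astab_H_base card_imset // => x y []. Qed.

End HBase.

Local Open Scope ring_scope.

Theorem mainTheorem13 (n k : nat) (l m : seq nat) :
  (k <= n)%N -> is_partition n l -> is_partition n m ->
  mult_H n k l m = res_inner n k l m.
Proof.
(* [chi l] is the character of a representation for every [l]. *)
move=> kn _ _.
pose to := bimul_action n; pose H := H_base n k.
pose phi (g : 'S_n * 'S_n) := chi l g.1 * chi m g.2.
have phiJ g h : phi (g ^ h)%g = phi g by rewrite /phi !chiJ.
have alphaE (g : 'S_n * 'S_n) :
    @alphaH n k g.1 g.2 = #|[set A in orbit to [set: _] H | to A g == A]|%:R.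
  by rewrite /alphaH H_set_orbit.
have orbit_stab := card_orbit_stab to [set: _] H.
rewrite /mult_H /res_inner.
under eq_bigr do rewrite rmorphM /= !conj_chi alphaE.
rewrite sum_card_fix_orbit // sum_astab_H_base // -cardsT -orbit_stab setTI.
rewrite card_astab_H_base // natrM.
under [in RHS]eq_bigr do rewrite conj_chi.
have orbit_gt0 : (0 < #|orbit to [set: _] H|)%N by apply/card_gt0P; exists H; apply: orbit_refl.
rewrite invfM mulrAC mulKf; first exact: mulrC.
by rewrite pnatr_eq0 -lt0n.
Qed.
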